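(* Let $\Sigma=(\mathbb{N}_0,X,U,\mathscr{U},\phi)$ be a control system as in the standing setup and let $Q\subset X$ be a control set. If $\mathrm{MEI}_k(Q)\cap\operatorname{Int}(Q)\ne\emptyset$ for some $k\in\mathbb N$, then $\mathrm{MEI}_k(Q)=Q$.
   Context: Standing setup: $(X,d)$ is a metric space, $U$ is a compact metric space, and $F:X\times U\to X$ is a map such that $F_u:=F(\cdot,u)$ is continuous for every $u\in U$. Let $\mathscr U=U^{\mathbb N_0}$ with the product topology. For $\omega=(\omega_0,\omega_1,\dots)\in\mathscr U$, $x\in X$, set $\phi(0,x,\omega)=x$ and $\phi(k,x,\omega)=F_{\omega_{k-1}}\circ\cdots\circ F_{\omega_0}(x)$ for $k\ge1$. It is assumed that $\phi:\mathbb N_0\times X\times\mathscr U\to X$ is continuous. Notation: $\mathbb N=\{1,2,\dots\}$; $B(x,\delta)$ is the open ball; $d(y,Q)=\inf_{q\in Q}d(y,q)$; $\operatorname{Int}(Q)$ is the interior of $Q$ in $X$. Control set: $D\subset X$ is a control set if (i) for every $x\in D$ there is $\omega\in\mathscr U$ with $\phi(k,x,\omega)\in D$ for all $k\in\mathbb N_0$; (ii) for every $x\in D$, $D\subset\operatorname{cl}\mathcal O^+(x)$, where $\mathcal O^+(x)=\{\phi(m,x,\omega):m\in\mathbb N_0,\omega\in\mathscr U\}$; (iii) $D$ is maximal with (i) and (ii). For $k\in\mathbb N$: $\mathrm{MEI}_k(Q)$ is the set of $x\in Q$ for which there exist $\delta>0$ and $\omega\in\mathscr U$ such that $\limsup_{n\to\infty}\frac1n\sum_{i=0}^{n-1}d(\phi(i,y,\omega),Q)<\frac1k$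 for all $y\in B(x,\delta)\cap Q$. *)

From HB Require Import structures.
From mathcomp Require Import all_boot all_order all_algebra.
From mathcomp Require Import all_classical all_reals all_analysis.
Set Implicit Arguments. Unset Strict Implicit. Unset Printing Implicit Defensive.
Import Order.TTheory GRing.Theory Num.Theory.
Local Open Scope classical_set_scope.
Local Open Scope ring_scope.

Section Defs.
Context {R : realType} {X U : metricType R}.
Variable F : X -> U -> X.

Fixpoint phi (k : nat) (x : X) (w : nat -> U) : X :=
  match k with
  | 0 => x
  | k'.+1 => F (phi k' x w) (w k')
  end.

Definition orbit_plus (x : X) : set X :=
  [set y | exists m w, y = phi m x w].

Definition ctrl_i (D : set X) : Prop :=
  forall x, D x -> exists w : nat -> U, forall k, D (phi k x w).

Definition ctrl_ii (D : set X) : Prop :=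
  forall x, D x -> D `<=` closure (orbit_plus x).

Definition control_set (D : set X) : Prop :=
  [/\ ctrl_i D, ctrl_ii D &
      forall D' : set X, D `<=` D' -> ctrl_i D' -> ctrl_ii D' -> D' = D].

Definition dist_set (y : X) (Q : set X) : R :=
  inf [set mdist y q | q in Q].

Definition avg_dist (Q : set X) (y : X) (w : nat -> U) (n : nat) : R :=
  n%:R^-1 * \sum_(0 <= i < n) dist_set (phi i y w) Q.

Definition MEI (k : nat) (Q : set X) : set X :=
  [set x | Q x /\ exists2 delta : R, 0 < delta &
     exists w : nat -> U, forall y, mdist x y < delta -> Q y ->
       (limn_esup (fun n => (avg_dist Q y w n)%:E) < (k%:R^-1)%:E)%E].

End Defs.

(* Let x0 be in MEI_k(Q) and in the interior of Q, with radius d and control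
   om witnessing x0 ∈ MEI_k(Q), and a ball B(x0,e) ⊆ Q.  Given y ∈ Q, the
   control-set property puts x0 in the closure of the positive orbit of y, so
   some finite control word w of length m steers y into B(x0, min e d); by
   continuity of the m-step map the same word steers every z close to y there.
   Following w and then om from such a z ∈ Q yields a trajectory whose tail is
   a trajectory from a point of B(x0,d) ∩ Q under om, and Cesàro averages of
   a sequence have the same limsup bound as those of any of its tails. *)
From HB Require Import structures.
From mathcomp Require Import all_boot all_order all_algebra.
From mathcomp Require Import all_classical all_reals all_analysis.
From mathcomp Require Import zify lra.
Import Order.TTheory GRing.Theory Num.Theory.
Set Implicit Arguments. Unset Strict Implicit.
Local Open Scope classical_set_scope.
Local Open Scope ring_scope.

Section cesaro.
Context {R : realType}.
Implicit Types (a b u : nat -> R) (c r e : R).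

Definition avgR u (n : nat) : R := n%:R^-1 * \sum_(0 <= i < n) u i.

Lemma avgR_mul u n : n%:R * avgR u n = \sum_(0 <= i < n) u i.
Proof.
case: n => [|n]; first by rewrite mul0r big_geq.
by rewrite /avgR mulrA divff ?mul1r ?pnatr_eq0.
Qed.

Lemma avgR_mul_shift a b m n : (m <= n)%N -> (forall i, a (i + m)%N = b i) ->
  n%:R * avgR a n = \sum_(0 <= i < m) a i + (n - m)%:R * avgR b (n - m).
Proof.
move=> mn ab; rewrite !avgR_mul -{1}(subnK mn).
rewrite (big_cat_nat _ (leq_addl _ _)) //= -{2}(add0n m) big_addn addnK.
by congr (_ + _); apply: eq_bigr => i _.
Qed.

Lemma limn_esup_lt_near u c : 0 < c ->
  (limn_esup (fun n => (u n)%:E) < c%:E)%E ->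
  exists r, [/\ 0 <= r, r < c & \forall n \near \oo, u n <= r].
Proof.
rewrite /limn_esup limf_esupE => c0 /ereal_inf_lt [_ [V [N _ NV] <-]].
have ub n : (N <= n)%N -> ((u n)%:E <= ereal_sup [set (u x)%:E | x in V])%E.
  by move=> Nn; apply: ereal_sup_ubound; exists n => //; apply: NV.
case: (ereal_sup _) ub => [s| |] ub // supc.
- exists (Num.max s 0); split; rewrite ?le_max ?lexx ?orbT //.
    by rewrite gt_max c0 andbT -lte_fin.
  exists N => // n /ub; rewrite -lee_fin => /le_trans; apply.
  by rewrite lee_fin le_max lexx.
- by exists 0; split => //; exists N => // n /ub.
Qed.

Lemma limn_esup_le_near u r : (\forall n \near \oo, u n <= r) ->
  (limn_esup (fun n => (u n)%:E) <= r%:E)%E.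
Proof.
case=> N _ hN; rewrite /limn_esup limf_esupE.
apply: (le_trans (ereal_inf_lbound _)).
  by exists [set n | (N <= n)%N]; [exists N|].
by apply: ge_ereal_sup => _ [n Nn <-]; rewrite lee_fin; apply: hN.
Qed.

(* Prepending m terms to a sequence perturbs its averages by O(1/n): an
   eventual bound r ≥ 0 on the averages of the tail b becomes an eventual
   bound r + e on the averages of a, for every e > 0. *)
Lemma avgR_shift_near a b m r : 0 <= r -> (forall i, a (i + m)%N = b i) ->
  (\forall n \near \oo, avgR b n <= r) ->
  forall e, 0 < e -> \forall n \near \oo, avgR a n <= r + e.
Proof.
move=> r0 ab [N _ hN] e e0.
set C := \sum_(0 <= i < m) a i.
have [M _ hM] := nbhs_infty_gtr (`|C| / e).
exists (N + m + M).+1 => // n /= hn.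
have n0 : 0 < n%:R :> R by rewrite ltr0n; lia.
have tail_bound : (n - m)%:R * avgR b (n - m) <= n%:R * r.
  apply: (@le_trans _ _ ((n - m)%:R * r)).
    by rewrite ler_wpM2l // hN //=; lia.
  by rewrite ler_wpM2r // ler_nat leq_subr.
have prefix_bound : `|C| <= n%:R * e.
  by rewrite -ler_pdivrMr // ltW // hM //=; lia.
have mn : (m <= n)%N by lia.
rewrite -(ler_pM2l n0) (avgR_mul_shift mn ab).
rewrite -/C mulrDr; have := ler_norm C; lra.
Qed.

Lemma limn_esup_avgR_shift a b m c : 0 < c -> (forall i, a (i + m)%N = b i) ->
  (limn_esup (fun n => (avgR b n)%:E) < c%:E)%E ->
  (limn_esup (fun n => (avgR a n)%:E) < c%:E)%E.
Proof.
move=> c0 ab /(limn_esup_lt_near c0) [r [r0 rc hb]].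
have e0 : 0 < (c - r) / 2 by rewrite divr_gt0 // subr_gt0.
apply: le_lt_trans (limn_esup_le_near (avgR_shift_near r0 ab hb e0)) _.
by rewrite lte_fin; lra.
Qed.

End cesaro.

Section trajectories.
Context {R : realType} {X U : metricType R}.
Variable F : X -> U -> X.
Implicit Types (x y z : X) (w om : nat -> U).

Definition concat_ctrl (m : nat) w om : nat -> U :=
  fun j => if (j < m)%N then w j else om (j - m)%N.

Lemma phi_ext m x w w' : (forall j, (j < m)%N -> w j = w' j) ->
  phi F m x w = phi F m x w'.
Proof.
elim: m => [|m IH] ww' //=.
by rewrite IH ?ww' // => j jm; apply: ww'; apply: ltnW.
Qed.

Lemma phi_add i m x w :
  phi F (i + m) x w = phi F i (phi F m x w) (fun j => w (j + m)%N).
Proof. by elim: i => [|i IH] //=; rewrite IH. Qed.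

Lemma phi_concat i m x w om :
  phi F (i + m) x (concat_ctrl m w om) = phi F i (phi F m x w) om.
Proof.
rewrite phi_add (@phi_ext m x _ w); last by move=> j jm; rewrite /concat_ctrl jm.
congr (phi F i _ _); apply/funext => j.
by rewrite /concat_ctrl ltnNge leq_addl addnK.
Qed.

Lemma limn_esup_avg_concat Q m z w om c : 0 < c ->
  (limn_esup (fun n => (avg_dist F Q (phi F m z w) om n)%:E) < c%:E)%E ->
  (limn_esup (fun n => (avg_dist F Q z (concat_ctrl m w om) n)%:E) < c%:E)%E.
Proof.
move=> c0; apply: (limn_esup_avgR_shift (m := m) c0) => i.
by rewrite phi_concat.
Qed.

Hypothesis hFu : forall u : U, continuous (fun x : X => F x u).

Lemma phi_cont m w : continuous (fun x => phi F m x w).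
Proof.
elim: m => [|m IH] x /=; first exact: cvg_id.
exact: (continuous_comp (IH x) (@hFu (w m) _)).
Qed.

Lemma near_orbit_closure x0 y eps : 0 < eps -> closure (orbit_plus F y) x0 ->
  exists m w, \forall z \near y, ball x0 eps (phi F m z w).
Proof.
move=> eps0 cl; have eps20 : 0 < eps / 2 by rewrite divr_gt0.
have [_ [[m [w ->]] x0_near]] := cl _ (nbhsx_ballx x0 _ eps20).
exists m, w; near=> z.
rewrite (splitr eps); apply: ball_triangle x0_near _.
near: z; exact: (@phi_cont m w y _ (nbhsx_ballx _ _ eps20)).
Unshelve. all: by end_near. Qed.

End trajectories.

Theorem mainTheorem9 (R : realType) (X U : metricType R) (F : X -> U -> X)
  (hU : compact [set: U])
  (hFu : forall u : U, continuous (fun x : X => F x u))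
  (hphi : forall m : nat,
     continuous (fun p : X * {ptws nat -> U} => phi F m p.1 p.2))
  (Q : set X) (hQ : control_set F Q) (k : nat) (hk : (0 < k)%N) :
  (MEI F k Q `&` interior Q) !=set0 -> MEI F k Q = Q.
Proof.
move=> [x0 [[Qx0 [d d0 [om x0_MEI]]] /nbhs_ballP [e e0 ballQ]]].
apply/seteqP; split=> [x [] //|y Qy]; split=> //.
have [_ orbit_dense _] := hQ.
have eps0 : 0 < Num.min e d by rewrite lt_min e0 d0.
have [m [w /nbhs_ballP [delta delta0 steer]]] :=
  near_orbit_closure hFu eps0 (orbit_dense y Qy x0 Qx0).
exists delta => //; exists (concat_ctrl m w om) => z yz Qz.
have := steer z; rewrite !ballEmdist /= => /(_ yz).
rewrite lt_min => /andP [near_e near_d].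
apply: limn_esup_avg_concat; first by rewrite invr_gt0 ltr0n.
by apply: x0_MEI near_d _; apply: ballQ; rewrite ballEmdist.
Qed.
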